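(* For $\Sigma(p_1,p_2,p_3)$ with $\frac1{p_1}+\frac1{p_2}+\frac1{p_3}<1$ and for $\Sigma(2,3,5)$, the coefficients satisfy $\lambda_0=1$, \[ \lambda_1=-\frac14\Bigl(\phi+P\Bigl(1-\frac1{p_1^2}-\frac1{p_2^2}-\frac1{p_3^2}\Bigr)\Bigr), \] \[ \lambda_2=\frac1{12}\Biggl(\frac{3\phi^2+12\phi-4}8+\frac{3P}4(\phi+2)\Bigl(1-\sum_{j=1}^3\frac1{p_j^2}\Bigr)+\frac{P^2}8\Bigl(2\Bigl(1-\sum_{j=1}^3\frac1{p_j^4}\Bigr)+5\Bigl(1-\sum_{j=1}^3\frac1{p_j^2}\Bigr)^2\Bigr)\Biggr), \] where $\phi=\phi(p_1,p_2,p_3)$.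
   Context: $p_1,p_2,p_3$ pairwise coprime positive integers, $P=p_1p_2p_3$, $\phi=3-\frac1P+12(s(p_2p_3,p_1)+s(p_1p_3,p_2)+s(p_1p_2,p_3))$ with Dedekind sums $s(b,a)=\sum_{k=1}^{a-1}((k/a))((kb/a))$. The $\lambda_n$ are the coefficients of the formal power series $\tau_\infty=\sum_n\lambda_n(q-1)^n$ defined by: for $\sum1/p_j<1$, $q^{\phi/4-1/2}(q-1)\tau_\infty=\frac12\sum_{k\ge0}\frac{L(-2k,\chi_{2P}^{(1,1,1)})}{k!}(\frac{\log q}{4P})^k$, and for $\Sigma(2,3,5)$, $q^{121/120}(q-1)\tau_\infty=q^{1/120}+\frac12\sum_{k\ge0}\frac{L(-2k,\chi_{60}^{(1,1,1)})}{k!}(\frac{\log q}{120})^k$. Here $\chi_{2P}^{(1,1,1)}$ is the odd $2P$-periodic function with $\chi(n)=1$ if $n\equiv P(1+\sum_j\varepsilon_j/p_j)\pmod{2P}$ with signs of product $-1$, $-1$ if product $1$, $0$ otherwise ($\chi_{60}^{(1,1,1)}$ is $-1$ on $1,11,19,29$ and $+1$ on $31,41,49,59$ mod $60$); $L(-2k,\chi)=-\frac{(2P)^{2k}}{2k+1}\sum_{j=1}^{2P}\chi(j)B_{2k+1}(j/(2P))$, $B_n$ Bernoulli polynomials. *)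

From mathcomp Require Import all_boot all_order all_algebra.
Set Implicit Arguments. Unset Strict Implicit. Unset Printing Implicit Defensive.
Import Order.TTheory GRing.Theory Num.Theory.
Local Open Scope ring_scope.

(* ---------- formal power series in x = q - 1, as coefficient sequences ---------- *)
Definition fps := nat -> rat.
Definition fps_one : fps := fun n => (n == 0%N)%:R.
Definition fps_mul (f g : fps) : fps :=
  fun n => \sum_(i < n.+1) f i * g (n - i)%N.
Definition fps_pow (f : fps) (k : nat) : fps := iter k (fps_mul f) fps_one.
(* (q - 1) * f *)
Definition fps_shift (f : fps) : fps := fun n => if n is m.+1 then f m else 0.
(* q^a = (1 + x)^a  (binomial series), a rational *)
Definition qpow (a : rat) : fps :=
  fun n => (\prod_(i < n) (a - i%:R)) / (n`!)%:R.
(* log q = log (1 + x) *)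
Definition logq : fps :=
  fun n => if n is m.+1 then (-1) ^+ m / (m.+1)%:R else 0.
(* sum_k c_k g^k, for g with zero constant term (formal substitution):
   only k <= n contributes to the coefficient of x^n *)
Definition fps_subst (c : nat -> rat) (g : fps) : fps :=
  fun n => \sum_(k < n.+1) c k * fps_pow g k n.

Definition sawtooth (x : rat) : rat :=
  if x \is a Num.int then 0 else x - (Num.floor x)%:~R - 1 / 2.
Definition dedekind_sum (b a : nat) : rat :=
  \sum_(1 <= k < a) sawtooth (k%:R / a%:R) * sawtooth ((k * b)%:R / a%:R).

Definition PP (p1 p2 p3 : nat) : nat := (p1 * p2 * p3)%N.

Definition phi (p1 p2 p3 : nat) : rat :=
  3 - 1 / (PP p1 p2 p3)%:R
  + 12 * (dedekind_sum (p2 * p3) p1 + dedekind_sum (p1 * p3) p2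
          + dedekind_sum (p1 * p2) p3).

Definition sgnb (e : bool) : int := if e then 1 else -1.
(* P (1 + sum_j eps_j / p_j) = P + sum_j eps_j (P / p_j) *)
Definition chi_res (p1 p2 p3 : nat) (e1 e2 e3 : bool) : int :=
  (PP p1 p2 p3)%:Z + sgnb e1 * (PP p1 p2 p3 %/ p1)%N%:Z
  + sgnb e2 * (PP p1 p2 p3 %/ p2)%N%:Z + sgnb e3 * (PP p1 p2 p3 %/ p3)%N%:Z.
Definition chi_hit (p1 p2 p3 : nat) (s : int) (n : int) : bool :=
  [exists e1 : bool, exists e2 : bool, exists e3 : bool,
    (sgnb e1 * sgnb e2 * sgnb e3 == s) &&
    ((2 * PP p1 p2 p3)%N%:Z %| n - chi_res p1 p2 p3 e1 e2 e3)%Z].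
Definition chi (p1 p2 p3 : nat) (n : int) : rat :=
  if chi_hit p1 p2 p3 (-1) n then 1
  else if chi_hit p1 p2 p3 1 n then -1 else 0.

(* ---------- Bernoulli numbers (B_1 = -1/2) and polynomials ---------- *)
(* bern_seq n = [:: B_0; ...; B_n], via sum_{k=0}^{m} C(m+1,k) B_k = 0 (m >= 1) *)
Fixpoint bern_seq (n : nat) : seq rat :=
  match n with
  | 0 => [:: 1]
  | m.+1 => let s := bern_seq m in
      rcons s (- (m.+2)%:R^-1 * \sum_(k < m.+1) ('C(m.+2, k))%:R * nth 0 s k)
  end.
Definition bernoulli (n : nat) : rat := nth 0 (bern_seq n) n.
Definition bernpoly (n : nat) (x : rat) : rat :=
  \sum_(k < n.+1) ('C(n, k))%:R * bernoulli k * x ^+ (n - k).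

(* L(-2k, chi) = -(2P)^{2k}/(2k+1) sum_{j=1}^{2P} chi(j) B_{2k+1}(j/(2P)) *)
Definition Lneg (p1 p2 p3 : nat) (k : nat) : rat :=
  let N := (2 * PP p1 p2 p3)%N in
  - (N%:R ^+ (2 * k)) / (2 * k + 1)%N%:R *
    \sum_(1 <= j < N.+1) chi p1 p2 p3 j%:Z * bernpoly (2 * k + 1) (j%:R / N%:R).

(* ---------- the defining identities of tau_infty = sum_n lam n (q-1)^n ---------- *)
(* case sum 1/p_j < 1 :
   q^{phi/4-1/2} (q-1) tau = 1/2 sum_k L(-2k,chi)/k! (log q / (4P))^k *)
Definition is_tau_hyp (p1 p2 p3 : nat) (lam : fps) : Prop :=
  forall n : nat,
    fps_mul (qpow (phi p1 p2 p3 / 4 - 1 / 2)) (fps_shift lam) n =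
    fps_subst (fun k => 1 / 2 * Lneg p1 p2 p3 k / (k`!)%:R
                        / ((4 * PP p1 p2 p3)%N%:R ^+ k)) logq n.
(* case Sigma(2,3,5):
   q^{121/120} (q-1) tau = q^{1/120} + 1/2 sum_k L(-2k,chi_60)/k! (log q / 120)^k *)
Definition is_tau_235 (lam : fps) : Prop :=
  forall n : nat,
    fps_mul (qpow (121 / 120)) (fps_shift lam) n =
    qpow (1 / 120) n +
    fps_subst (fun k => 1 / 2 * Lneg 2 3 5 k / (k`!)%:R / (120 ^+ k)) logq n.

Definition lam_values (p1 p2 p3 : nat) (lam : fps) : Prop :=
  let P := (PP p1 p2 p3)%:R : rat in
  let ph := phi p1 p2 p3 in
  let S2 := 1 - 1 / (p1%:R ^+ 2) - 1 / (p2%:R ^+ 2) - 1 / (p3%:R ^+ 2) in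
  let S4 := 1 - 1 / (p1%:R ^+ 4) - 1 / (p2%:R ^+ 4) - 1 / (p3%:R ^+ 4) in
  [/\ lam 0%N = 1,
      lam 1%N = - (1 / 4) * (ph + P * S2)
    & lam 2%N = 1 / 12 * ((3 * ph ^+ 2 + 12 * ph - 4) / 8
                          + 3 * P / 4 * (ph + 2) * S2
                          + P ^+ 2 / 8 * (2 * S4 + 5 * S2 ^+ 2))].

(* The identity defining [tau_infty] has the form [q^a (q - 1) tau = R(q)]
   with [R(1) = 0], and [q^a] is a unit, so it has a unique solution whose
   coefficients [lam 0], [lam 1], [lam 2] are read off from the first four
   coefficients of [R].  These involve [L(-2k, chi)] for [k <= 3].  When
   [sum 1/p_j < 1], the eight residues [P (1 + sum eps_j / p_j)] lie in
   [(0, 2P)] and are pairwise distinct (by coprimality), so [L(-2k, chi)] is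
   an alternating sum of [B_{2k+1}] over the points [1/2 + sum eps_j/(2 p_j)];
   such alternating sums of odd Bernoulli polynomials are explicit symmetric
   polynomials in the [1/(2 p_j)], and the claimed values follow.  For
   [Sigma(2,3,5)] two of the points, [61/60] and [-1/60], fall outside
   [(0, 1)]; moving them back shifts [L(-2k, chi)] by exactly [-2], which is
   absorbed by the extra term [q^(1/120) = exp (log q / 120)], so the same
   formulas hold. *)

From mathcomp Require Import all_boot all_order all_algebra.
From mathcomp Require Import ring zify.
Import Order.TTheory GRing.Theory Num.Theory.
Local Open Scope ring_scope.

(* [binomial], [factorial] and the [ssrnat] operations do not reduce under
   [simpl]; closed instances are evaluated explicitly. *)
Ltac is_nat_literal n :=
  lazymatch n with O => idtac | S ?m => is_nat_literal m end.

Ltac eval_nat_op t :=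
  let v := eval vm_compute in t in is_nat_literal v; change t with v.

Ltac eval_closed_nat :=
  repeat match goal with
  | |- context [binomial ?n ?k] => eval_nat_op (binomial n k)
  | |- context [subn ?n ?k] => eval_nat_op (subn n k)
  | |- context [addn ?n ?k] => eval_nat_op (addn n k)
  | |- context [muln ?n ?k] => eval_nat_op (muln n k)
  | |- context [factorial ?n] => eval_nat_op (factorial n)
  end.

Lemma fps_mul0 f g : fps_mul f g 0 = f 0%N * g 0%N.
Proof. by rewrite /fps_mul big_ord_recr big_ord0 /= add0r. Qed.

Lemma fps_mul1 f g : fps_mul f g 1 = f 0%N * g 1%N + f 1%N * g 0%N.
Proof. by rewrite /fps_mul !big_ord_recr big_ord0 /= add0r. Qed.

Lemma fps_mul2 f g :
  fps_mul f g 2 = f 0%N * g 2%N + f 1%N * g 1%N + f 2%N * g 0%N.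
Proof. by rewrite /fps_mul !big_ord_recr big_ord0 /= add0r. Qed.

Lemma fps_mul3 f g :
  fps_mul f g 3 = f 0%N * g 3%N + f 1%N * g 2%N + f 2%N * g 1%N + f 3%N * g 0%N.
Proof. by rewrite /fps_mul !big_ord_recr big_ord0 /= add0r. Qed.

Lemma fps_mul_shift g f n : fps_mul g (fps_shift f) n = fps_shift (fps_mul g f) n.
Proof.
case: n => [|n]; first by rewrite fps_mul0 mulr0.
rewrite /fps_mul big_ord_recr /= subnn mulr0 addr0; apply: eq_bigr => i _.
by rewrite subSn // -ltnS.
Qed.

Section FpsDivision.
Variables (g h : fps).
Hypothesis g0 : g 0%N = 1.

(* The first [n.+1] coefficients of [h / g], by forward substitution. *)
Fixpoint fps_div_seq (n : nat) : seq rat :=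
  if n is m.+1 then
    let s := fps_div_seq m in
    rcons s (h n - \sum_(i < n) g i.+1 * nth 0 s (m - i))
  else [:: h 0%N].

Definition fps_div : fps := fun n => nth 0 (fps_div_seq n) n.

Lemma size_fps_div_seq n : size (fps_div_seq n) = n.+1.
Proof. by elim: n => //= n IH; rewrite size_rcons IH. Qed.

Lemma nth_fps_div_seq n k : (k <= n)%N -> nth 0 (fps_div_seq n) k = fps_div k.
Proof.
elim: n => [|n IH]; first by rewrite leqn0 => /eqP ->.
rewrite leq_eqVlt => /orP[/eqP -> //|]; rewrite ltnS => kn /=.
by rewrite nth_rcons size_fps_div_seq ltnS kn IH.
Qed.

Lemma fps_mul_div n : fps_mul g fps_div n = h n.
Proof.
case: n => [|n]; first by rewrite fps_mul0 g0 mul1r.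
rewrite /fps_mul big_ord_recl g0 mul1r subn0 {1}/fps_div /= nth_rcons.
rewrite size_fps_div_seq ltnn eqxx -[RHS]subr0 -addrA; congr (_ + _).
rewrite addrC; apply/eqP; rewrite subr_eq0; apply/eqP/eq_bigr => i _.
by rewrite nth_fps_div_seq // leq_subr.
Qed.

End FpsDivision.

Lemma fps_shift_solvable g r : g 0%N = 1 -> r 0%N = 0 ->
  exists lam : fps, forall n, fps_mul g (fps_shift lam) n = r n.
Proof.
move=> g0 r0; exists (fps_div g (fun n => r n.+1)) => n.
by rewrite fps_mul_shift; case: n => [|n] //=; rewrite fps_mul_div.
Qed.

Lemma fps_shift_solution [g r lam] : g 0%N = 1 ->
  (forall n, fps_mul g (fps_shift lam) n = r n) ->
  [/\ lam 0%N = r 1%N, lam 1%N = r 2%N - g 1%N * lam 0%N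
    & lam 2%N = r 3%N - g 1%N * lam 1%N - g 2%N * lam 0%N].
Proof.
move=> g0 sol; rewrite -(sol 1%N) -(sol 2%N) -(sol 3%N).
by rewrite fps_mul1 fps_mul2 fps_mul3 /= g0; split; ring.
Qed.

Lemma qpow0 a : qpow a 0 = 1.
Proof. by rewrite /qpow big_ord0 divr1. Qed.

Lemma qpow1 a : qpow a 1 = a.
Proof. by rewrite /qpow big_ord_recr big_ord0 /= mul1r subr0 divr1. Qed.

Lemma qpow2 a : qpow a 2 = a * (a - 1) / 2.
Proof. by rewrite /qpow !big_ord_recr big_ord0 /=; eval_closed_nat; field. Qed.

Lemma qpow3 a : qpow a 3 = a * (a - 1) * (a - 2) / 6.
Proof. by rewrite /qpow !big_ord_recr big_ord0 /=; eval_closed_nat; field. Qed.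

Lemma fps_subst_logq c :
  [/\ fps_subst c logq 0 = c 0%N, fps_subst c logq 1 = c 1%N,
      fps_subst c logq 2 = - c 1%N / 2 + c 2%N
    & fps_subst c logq 3 = c 1%N / 3 - c 2%N + c 3%N].
Proof.
rewrite /fps_subst !big_ord_recr !big_ord0 /= !(fps_mul0, fps_mul1, fps_mul2, fps_mul3).
by rewrite /fps_one /logq /=; eval_closed_nat; split; field.
Qed.

Lemma eq_fps_subst c d g n : (forall k, (k <= n)%N -> c k = d k) ->
  fps_subst c g n = fps_subst d g n.
Proof. by move=> cd; apply: eq_bigr => k _; rewrite cd // -ltnS. Qed.

Lemma fps_substD c d g n :
  fps_subst (fun k => c k + d k) g n = fps_subst c g n + fps_subst d g n.
Proof. by rewrite /fps_subst -big_split; apply: eq_bigr => k _; rewrite mulrDl. Qed.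

Lemma qpow_exp_logq a n : (n <= 3)%N ->
  qpow a n = fps_subst (fun k => a ^+ k / k`!%:R) logq n.
Proof.
have [s0 s1 s2 s3] := fps_subst_logq (fun k => a ^+ k / k`!%:R).
case: n => [|[|[|[|//]]]] _; rewrite ?s0 ?s1 ?s2 ?s3 ?qpow0 ?qpow1 ?qpow2 ?qpow3;
  by eval_closed_nat; field.
Qed.

Lemma size_bern_seq n : size (bern_seq n) = n.+1.
Proof. by elim: n => //= n IH; rewrite size_rcons IH. Qed.

Lemma nth_bern_seq n k : (k <= n)%N -> nth 0 (bern_seq n) k = bernoulli k.
Proof.
elim: n => [|n IH]; first by rewrite leqn0 => /eqP ->.
rewrite leq_eqVlt => /orP[/eqP -> //|]; rewrite ltnS => kn /=.
by rewrite nth_rcons size_bern_seq ltnS kn IH.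
Qed.

Lemma bernoulliS m : bernoulli m.+1 =
  - (m.+2)%:R^-1 * \sum_(k < m.+1) ('C(m.+2, k))%:R * bernoulli k.
Proof.
rewrite /bernoulli /= nth_rcons size_bern_seq ltnn eqxx.
by congr (_ * _); apply: eq_bigr => k _; rewrite nth_bern_seq // -ltnS.
Qed.

Ltac expand_bernoulli :=
  rewrite bernoulliS !big_ord_recr big_ord0 /=; eval_closed_nat.

Lemma bernoulli0 : bernoulli 0 = 1. Proof. by []. Qed.
Lemma bernoulli1 : bernoulli 1 = -1/2.
Proof. by expand_bernoulli; rewrite bernoulli0; field. Qed.
Lemma bernoulli2 : bernoulli 2 = 1/6.
Proof. by expand_bernoulli; rewrite bernoulli0 bernoulli1; field. Qed.
Lemma bernoulli3 : bernoulli 3 = 0.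
Proof. by expand_bernoulli; rewrite bernoulli0 bernoulli1 bernoulli2; field. Qed.
Lemma bernoulli4 : bernoulli 4 = -1/30.
Proof.
by expand_bernoulli; rewrite bernoulli0 bernoulli1 bernoulli2 bernoulli3; field.
Qed.
Lemma bernoulli5 : bernoulli 5 = 0.
Proof.
expand_bernoulli.
by rewrite bernoulli0 bernoulli1 bernoulli2 bernoulli3 bernoulli4; field.
Qed.
Lemma bernoulli6 : bernoulli 6 = 1/42.
Proof.
expand_bernoulli.
by rewrite bernoulli0 bernoulli1 bernoulli2 bernoulli3 bernoulli4 bernoulli5; field.
Qed.
Lemma bernoulli7 : bernoulli 7 = 0.
Proof.
expand_bernoulli; rewrite bernoulli0 bernoulli1 bernoulli2 bernoulli3.
by rewrite bernoulli4 bernoulli5 bernoulli6; field.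
Qed.

Ltac expand_bernpoly :=
  rewrite /bernpoly !big_ord_recr big_ord0 /=; eval_closed_nat;
  rewrite bernoulli0 bernoulli1 ?bernoulli2 ?bernoulli3 ?bernoulli4
          ?bernoulli5 ?bernoulli6 ?bernoulli7; field.

Lemma bernpoly1 x : bernpoly 1 x = x - 1/2.
Proof. by expand_bernpoly. Qed.
Lemma bernpoly3 x : bernpoly 3 x = x^+3 - 3/2 * x^+2 + 1/2 * x.
Proof. by expand_bernpoly. Qed.
Lemma bernpoly5 x : bernpoly 5 x = x^+5 - 5/2 * x^+4 + 5/3 * x^+3 - 1/6 * x.
Proof. by expand_bernpoly. Qed.
Lemma bernpoly7 x :
  bernpoly 7 x = x^+7 - 7/2 * x^+6 + 7/2 * x^+5 - 7/6 * x^+3 + 1/6 * x.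
Proof. by expand_bernpoly. Qed.

Notation signs := (bool * bool * bool)%type.

Definition sign_prod (e : signs) : int := sgnb e.1.1 * sgnb e.1.2 * sgnb e.2.

(* [chi] takes the value [- sign_prod e] at the residue of sign vector [e]. *)
Definition chi_weight (e : signs) : rat := - (sign_prod e)%:~R.

Definition residue (p1 p2 p3 : nat) (e : signs) : int :=
  chi_res p1 p2 p3 e.1.1 e.1.2 e.2.

Lemma chi_hitE p1 p2 p3 s n : chi_hit p1 p2 p3 s n =
  [exists e : signs,
     (sign_prod e == s) && ((2 * PP p1 p2 p3)%N%:Z %| n - residue p1 p2 p3 e)%Z].
Proof.
apply/existsP/existsP => [[e1 /existsP[e2 /existsP[e3 H]]]|[[[e1 e2] e3] H]].
  by exists (e1, e2, e3).
by exists e1; apply/existsP; exists e2; apply/existsP; exists e3.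
Qed.

Lemma sign_prodE e : sign_prod e = 1 \/ sign_prod e = -1.
Proof. by case: e => [[[] []] []]; [left|right|right|left|right|left|left|right]. Qed.

Lemma eq_mod_in_range (N j m : nat) : (0 < j <= N)%N -> (0 < m <= N)%N ->
  (N%:Z %| j%:Z - m%:Z)%Z -> j = m.
Proof.
move=> /andP[j0 jN] /andP[m0 mN] /dvdzP[q Hq].
have : (q <= -1)%R \/ q = 0 \/ (1 <= q)%R by lia.
by case=> [hq|[hq|hq]]; [nia|subst q; lia|nia].
Qed.

Lemma sum_chi p1 p2 p3 (m : signs -> nat) (f : nat -> rat) :
  (forall e, 0 < m e < 2 * PP p1 p2 p3)%N -> injective m ->
  (forall e, ((2 * PP p1 p2 p3)%N%:Z %| (m e)%:Z - residue p1 p2 p3 e)%Z) ->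
  \sum_(1 <= j < (2 * PP p1 p2 p3).+1) chi p1 p2 p3 j%:Z * f j =
  \sum_(e : signs) chi_weight e * f (m e).
Proof.
set N := (2 * PP p1 p2 p3)%N => m_range m_inj m_res.
have hitP j e : (0 < j <= N)%N ->
    (N%:Z %| j%:Z - residue p1 p2 p3 e)%Z = (j == m e).
  move=> jN; have /andP[m0 mN] := m_range e.
  apply/idP/eqP => [jres|->]; last exact: m_res.
  apply: (@eq_mod_in_range N _ _ jN); first by rewrite m0 ltnW.
  set r := residue p1 p2 p3 e.
  have -> : j%:Z - (m e)%:Z = (j%:Z - r) - ((m e)%:Z - r) by ring.
  exact: rpredB.
have chiE j : (0 < j <= N)%N ->
    chi p1 p2 p3 j%:Z = \sum_(e : signs) (j == m e)%:R * chi_weight e.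
  move=> jN; rewrite /chi !chi_hitE.
  have [e je|no_e] := pickP (fun e => j == m e); last first.
    have hit s : [exists e, (sign_prod e == s) &&
                   (N%:Z %| j%:Z - residue p1 p2 p3 e)%Z] = false.
      by apply/existsP => -[e /andP[_]]; rewrite hitP // no_e.
    by rewrite !hit big1 // => e _; rewrite no_e mul0r.
  rewrite (bigD1 e) //= je mul1r big1 ?addr0; last first.
    move=> e' ne'; rewrite (eqP je) (inj_eq m_inj) eq_sym.
    by rewrite (negbTE ne') mul0r.
  have hit s : [exists e', (sign_prod e' == s) &&
                 (N%:Z %| j%:Z - residue p1 p2 p3 e')%Z] = (sign_prod e == s).
    apply/existsP/idP => [[e' /andP[/eqP <-]]|se]; last first.
      by exists e; rewrite se hitP.
    by rewrite hitP // (eqP je) => /eqP/m_inj ->.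
  by rewrite !hit /chi_weight; case: (sign_prodE e) => ->.
rewrite (eq_big_nat _ _ (F2 := fun j =>
   (\sum_(e : signs) (j == m e)%:R * chi_weight e) * f j)); last first.
  by move=> j jN; rewrite chiE.
under eq_bigr do rewrite mulr_suml.
rewrite exchange_big /=; apply: eq_bigr => e _.
under eq_bigr do rewrite -mulrA mulr_natl mulrb.
rewrite -big_mkcond big_nat1_eq.
by have /andP[-> /ltnW mN] := m_range e; rewrite ltnS mN.
Qed.

Lemma sum_signs (F : signs -> rat) : \sum_(e : signs) F e =
  F (true,true,true) + F (true,true,false) + F (true,false,true)
  + F (true,false,false) + F (false,true,true) + F (false,true,false)
  + F (false,false,true) + F (false,false,false).
Proof.
rewrite (eq_bigr (fun e : signs => F (e.1, e.2))); last by move=> [].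
rewrite -(pair_bigA _ (fun a c => F (a, c))) /=.
rewrite (eq_bigr (fun a : bool * bool => \sum_(c : bool) F (a.1, a.2, c))) /=;
  last by move=> [].
rewrite -(pair_bigA _ (fun a b => \sum_(c : bool) F (a, b, c))) /=.
by rewrite !big_bool /=; ring.
Qed.

Definition sign_point (y1 y2 y3 : rat) (e : signs) : rat :=
  1/2 + (sgnb e.1.1)%:~R * y1 + (sgnb e.1.2)%:~R * y2 + (sgnb e.2)%:~R * y3.

Ltac expand_sign_sum bp :=
  rewrite sum_signs /chi_weight /sign_point /sign_prod /= !bp; field.

Lemma sum_signs_bernpoly1 y1 y2 y3 :
  \sum_(e : signs) chi_weight e * bernpoly 1 (sign_point y1 y2 y3 e) = 0.
Proof. by expand_sign_sum bernpoly1. Qed.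

Lemma sum_signs_bernpoly3 y1 y2 y3 :
  \sum_(e : signs) chi_weight e * bernpoly 3 (sign_point y1 y2 y3 e) =
  -48 * y1 * y2 * y3.
Proof. by expand_sign_sum bernpoly3. Qed.

Lemma sum_signs_bernpoly5 y1 y2 y3 :
  \sum_(e : signs) chi_weight e * bernpoly 5 (sign_point y1 y2 y3 e) =
  y1 * y2 * y3 * (40 - 160 * (y1^+2 + y2^+2 + y3^+2)).
Proof. by expand_sign_sum bernpoly5. Qed.

Lemma sum_signs_bernpoly7 y1 y2 y3 :
  \sum_(e : signs) chi_weight e * bernpoly 7 (sign_point y1 y2 y3 e) =
  y1 * y2 * y3 * (-49 + 280 * (y1^+2 + y2^+2 + y3^+2)
     - 336 * (y1^+4 + y2^+4 + y3^+4)
     - 1120 * (y1^+2 * y2^+2 + y1^+2 * y3^+2 + y2^+2 * y3^+2)).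
Proof. by expand_sign_sum bernpoly7. Qed.

Definition sign_sum (p1 p2 p3 n : nat) : rat :=
  \sum_(e : signs) chi_weight e * bernpoly n
    (sign_point (1 / (2 * p1%:R)) (1 / (2 * p2%:R)) (1 / (2 * p3%:R)) e).

(* The coefficient of [(log q / 4P)^k] in the right-hand side of the defining
   identity, with [L(-2k, chi)] written as a sum over signs; for [Sigma(2,3,5)]
   the term [q^(1/120)] is absorbed into it. *)
Definition tau_coef (p1 p2 p3 k : nat) : rat :=
  1 / 2 * (- ((2 * PP p1 p2 p3)%N%:R ^+ (2 * k)) / (2 * k + 1)%N%:R
           * sign_sum p1 p2 p3 (2 * k + 1))
  / (k`!)%:R / ((4 * PP p1 p2 p3)%N%:R ^+ k).

Lemma tau_coef0 p1 p2 p3 : tau_coef p1 p2 p3 0 = 0.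
Proof. by rewrite /tau_coef /sign_sum sum_signs_bernpoly1 !mulr0 !mul0r. Qed.

Lemma lam_values_of_tau [p1 p2 p3 : nat] [lam r : fps] :
  (0 < p1)%N -> (0 < p2)%N -> (0 < p3)%N ->
  (forall n, fps_mul (qpow (phi p1 p2 p3 / 4 - 1 / 2)) (fps_shift lam) n = r n) ->
  (forall n, (n <= 3)%N -> r n = fps_subst (tau_coef p1 p2 p3) logq n) ->
  lam_values p1 p2 p3 lam.
Proof.
rewrite -!(ltr0n rat) => p1_gt0 p2_gt0 p3_gt0 tau rE.
have [l0 l1 l2] := fps_shift_solution (qpow0 _) tau.
have [_ t1 t2 t3] := fps_subst_logq (tau_coef p1 p2 p3).
rewrite /lam_values l2 l1 l0 !rE // t1 t2 t3 qpow1 qpow2 /tau_coef /sign_sum.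
rewrite sum_signs_bernpoly3 sum_signs_bernpoly5 sum_signs_bernpoly7 /PP /=.
by eval_closed_nat; split; field; rewrite !gt_eqF.
Qed.

Lemma coprime_dvdM_eq1 [p q r : nat] :
  coprime p q -> coprime p r -> (p %| q * r)%N -> p = 1%N.
Proof. by move=> cq cr; rewrite Gauss_dvdr // => /gcdn_idPl <-; apply/eqP. Qed.

Section Hyperbolic.
Variables p1 p2 p3 : nat.
Hypotheses (p1_gt0 : (0 < p1)%N) (p2_gt0 : (0 < p2)%N) (p3_gt0 : (0 < p3)%N).
Hypotheses (co12 : coprime p1 p2) (co13 : coprime p1 p3) (co23 : coprime p2 p3).
Hypothesis inv_sum_lt1 : 1 / p1%:R + 1 / p2%:R + 1 / p3%:R < 1 :> rat.

Let p1_neq0 : p1%:R != 0 :> rat. Proof. by rewrite pnatr_eq0 -lt0n. Qed.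
Let p2_neq0 : p2%:R != 0 :> rat. Proof. by rewrite pnatr_eq0 -lt0n. Qed.
Let p3_neq0 : p3%:R != 0 :> rat. Proof. by rewrite pnatr_eq0 -lt0n. Qed.

Lemma cofactor_sum_lt : (p2 * p3 + p1 * p3 + p1 * p2 < p1 * p2 * p3)%N.
Proof.
rewrite -(ltr_nat rat) -[X in _ < X]mulr1.
have -> : (p2 * p3 + p1 * p3 + p1 * p2)%N%:R =
          (p1 * p2 * p3)%N%:R * (1 / p1%:R + 1 / p2%:R + 1 / p3%:R) :> rat.
  by rewrite !natrD !natrM; field; rewrite p1_neq0 p2_neq0 p3_neq0.
by rewrite ltr_pM2l // ltr0n !muln_gt0 p1_gt0 p2_gt0 p3_gt0.
Qed.

(* The cofactors [P/p_j] are pairwise distinct and none is the sum of the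
   other two: either would force some [p_j] to divide a product of numbers
   coprime to it, hence [p_j = 1], which [cofactor_sum_lt] excludes. *)
Lemma cofactors_distinct : let a := (p2 * p3)%N in let b := (p1 * p3)%N in
  let c := (p1 * p2)%N in
  [/\ a != b, a != c & b != c]%N /\ [/\ a != b + c, b != a + c & c != a + b]%N.
Proof.
move=> a b c; have lt := cofactor_sum_lt.
have p1_neq1 : p1 != 1%N by apply/eqP => p1E; rewrite p1E in lt; nia.
have p2_neq1 : p2 != 1%N by apply/eqP => p2E; rewrite p2E in lt; nia.
have p3_neq1 : p3 != 1%N by apply/eqP => p3E; rewrite p3E in lt; nia.
have p1_ndvd : ~~ (p1 %| p2 * p3)%N.
  by apply: contra p1_neq1 => /(coprime_dvdM_eq1 co12 co13) ->.
have p2_ndvd : ~~ (p2 %| p1 * p3)%N.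
  have co21 : coprime p2 p1 by rewrite coprime_sym.
  by apply: contra p2_neq1 => /(coprime_dvdM_eq1 co21 co23) ->.
have p3_ndvd : ~~ (p3 %| p1 * p2)%N.
  have [co31 co32] : coprime p3 p1 /\ coprime p3 p2 by rewrite !(coprime_sym p3).
  by apply: contra p3_neq1 => /(coprime_dvdM_eq1 co31 co32) ->.
split; split; apply/eqP => E.
- by move: p1_ndvd; rewrite -/a E dvdn_mulr.
- by move: p1_ndvd; rewrite -/a E dvdn_mulr.
- by move: p2_ndvd; rewrite -/b E dvdn_mull.
- by move: p1_ndvd; rewrite -/a E /b /c -mulnDr dvdn_mulr.
- by move: p2_ndvd; rewrite -/b E /a /c [(p1 * p2)%N]mulnC -mulnDr dvdn_mulr.
- by move: p3_ndvd; rewrite -/c E /a /b -mulnDl dvdn_mull.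
Qed.

Lemma residueE e : residue p1 p2 p3 e = (p1 * p2 * p3)%N%:Z
  + sgnb e.1.1 * (p2 * p3)%N%:Z + sgnb e.1.2 * (p1 * p3)%N%:Z
  + sgnb e.2 * (p1 * p2)%N%:Z.
Proof.
rewrite /residue /chi_res /PP mulnK //.
have -> : (p1 * p2 * p3 %/ p1 = p2 * p3)%N by rewrite -mulnA mulKn.
by have -> : (p1 * p2 * p3 %/ p2 = p1 * p3)%N by rewrite (mulnC p1) -mulnA mulKn.
Qed.

Lemma residue_range e :
  (0 < residue p1 p2 p3 e)%R /\ (residue p1 p2 p3 e < (2 * PP p1 p2 p3)%N%:Z)%R.
Proof.
have lt := cofactor_sum_lt; rewrite residueE /PP.
move: (p2 * p3)%N (p1 * p3)%N (p1 * p2)%N (p1 * p2 * p3)%N lt => a b c P lt.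
by case: e => [[[] []] []] /=; lia.
Qed.

Lemma residue_inj : injective (fun e => absz (residue p1 p2 p3 e)).
Proof.
move=> e e'; have [lt0 ltN] := residue_range e; have [lt0' ltN'] := residue_range e'.
move: lt0 ltN lt0' ltN'; rewrite /= !residueE /PP.
have := cofactors_distinct; have := cofactor_sum_lt.
have : (0 < p2 * p3)%N && (0 < p1 * p3)%N && (0 < p1 * p2)%N.
  by rewrite !muln_gt0 p1_gt0 p2_gt0 p3_gt0.
move: (p2 * p3)%N (p1 * p3)%N (p1 * p2)%N (p1 * p2 * p3)%N => a b c P.
move=> /andP[/andP[a0 b0] c0] lt /= [[ab ac bc] [abc bac cab]].
by case: e e' => [[[] []] []] [[[] []] []] /= ? ? ? ? ? //; exfalso; lia.
Qed.

Lemma Lneg_sign_sum k : Lneg p1 p2 p3 k =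
  - ((2 * PP p1 p2 p3)%N%:R ^+ (2 * k)) / (2 * k + 1)%N%:R
  * sign_sum p1 p2 p3 (2 * k + 1).
Proof.
rewrite /Lneg (@sum_chi _ _ _ (fun e => absz (residue p1 p2 p3 e))).
- congr (_ * _); apply: eq_bigr => e _; congr (_ * bernpoly _ _).
  have [res_gt0 _] := residue_range e.
  rewrite natr_absz ger0_norm ?ltW // residueE /sign_point /PP.
  rewrite !intrD !intrM -!pmulrn !natrM.
  by field; rewrite p1_neq0 p2_neq0 p3_neq0.
- by move=> e; have [? ?] := residue_range e; apply/andP; split; lia.
- exact: residue_inj.
- move=> e; have [res_gt0 _] := residue_range e.
  by rewrite gez0_abs ?ltW // subrr dvdz0.
Qed.

Lemma hyperbolic_rhs n :
  fps_subst (fun k => 1 / 2 * Lneg p1 p2 p3 k / (k`!)%:R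
                      / ((4 * PP p1 p2 p3)%N%:R ^+ k)) logq n =
  fps_subst (tau_coef p1 p2 p3) logq n.
Proof. by apply: eq_fps_subst => k _; rewrite Lneg_sign_sum. Qed.

Lemma tau_hyp_lam_values : (exists lam : fps, is_tau_hyp p1 p2 p3 lam) /\
  (forall lam : fps, is_tau_hyp p1 p2 p3 lam -> lam_values p1 p2 p3 lam).
Proof.
split.
  apply: fps_shift_solvable; first exact: qpow0.
  rewrite hyperbolic_rhs; have [-> _ _ _] := fps_subst_logq (tau_coef p1 p2 p3).
  exact: tau_coef0.
move=> lam tau; apply: (lam_values_of_tau p1_gt0 p2_gt0 p3_gt0 tau) => n _.
exact: hyperbolic_rhs.
Qed.

End Hyperbolic.

Lemma phi_2_3_5 : phi 2 3 5 = 181 / 30.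
Proof.
have s1 : dedekind_sum (3 * 5) 2 = 0.
  by rewrite /dedekind_sum; do 1!rewrite big_ltn //; rewrite big_geq.
have s2 : dedekind_sum (2 * 5) 3 = 1 / 18.
  by rewrite /dedekind_sum; do 2!rewrite big_ltn //; rewrite big_geq.
have s3 : dedekind_sum (2 * 3) 5 = 1 / 5.
  by rewrite /dedekind_sum; do 4!rewrite big_ltn //; rewrite big_geq.
by rewrite /phi s1 s2 s3 /PP; field.
Qed.

(* For [Sigma(2,3,5)] the residues [30 +- 15 +- 10 +- 6] leave [(0, 60)] at
   [61] and [-1], so the representatives in [[1, 60]] are listed by hand. *)
Definition residue_2_3_5 (e : signs) : nat :=
  match e with
  | (true, true, true) => 1 | (true, true, false) => 49
  | (true, false, true) => 41 | (true, false, false) => 29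
  | (false, true, true) => 31 | (false, true, false) => 19
  | (false, false, true) => 11 | (false, false, false) => 59
  end.

Lemma Lneg_2_3_5_residues k :
  Lneg 2 3 5 k = - (60%:R ^+ (2 * k)) / (2 * k + 1)%N%:R *
  \sum_(e : signs) chi_weight e * bernpoly (2 * k + 1) ((residue_2_3_5 e)%:R / 60%:R).
Proof.
rewrite /Lneg (@sum_chi 2 3 5 residue_2_3_5).
- by rewrite [(2 * PP 2 3 5)%N](_ : _ = 60%N).
- by case=> [[[] []] []].
- by case=> [[[] []] []] [[[] []] []].
- by case=> [[[] []] []].
Qed.

(* Moving the points [61/60] and [-1/60] back into [(0, 1)] changes
   [B_n] by [n (1/60)^(n-1)] each. *)
Lemma sum_residues_2_3_5 k : (k <= 3)%N ->
  \sum_(e : signs) chi_weight e * bernpoly (2 * k + 1) ((residue_2_3_5 e)%:R / 60%:R) =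
  sign_sum 2 3 5 (2 * k + 1) + 2 * (2 * k + 1)%N%:R / 60 ^+ (2 * k).
Proof.
rewrite /sign_sum; case: k => [|[|[|[|//]]]] _; eval_closed_nat;
  rewrite !sum_signs /chi_weight /sign_prod /sign_point; cbn [fst snd sgnb residue_2_3_5];
  by rewrite ?bernpoly1 ?bernpoly3 ?bernpoly5 ?bernpoly7; field.
Qed.

Lemma tau_coef_2_3_5 k : (k <= 3)%N ->
  tau_coef 2 3 5 k = (1 / 120) ^+ k / k`!%:R
                     + 1 / 2 * Lneg 2 3 5 k / k`!%:R / 120 ^+ k.
Proof.
move=> k3; rewrite Lneg_2_3_5_residues sum_residues_2_3_5 // /tau_coef /PP.
rewrite [(2 * _)%N](_ : _ = 60%N) // [(4 * _)%N](_ : _ = 120%N) //.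
rewrite expr_div_n expr1n.
have [n60 n120] : 60 ^+ (2 * k) != 0 :> rat /\ 120 ^+ k != 0 :> rat.
  by split; apply: expf_neq0.
have nfact : k`!%:R != 0 :> rat by rewrite pnatr_eq0 -lt0n fact_gt0.
have nodd : 2 * k%:R + 1 != 0 :> rat by rewrite -natrM natr1 pnatr_eq0.
by field; rewrite n60 n120 nfact nodd.
Qed.

Lemma tau_235_lam_values : (exists lam : fps, is_tau_235 lam) /\
  (forall lam : fps, is_tau_235 lam -> lam_values 2 3 5 lam).
Proof.
have rhsE n : (n <= 3)%N ->
    qpow (1 / 120) n + fps_subst (fun k => 1 / 2 * Lneg 2 3 5 k / (k`!)%:R
                                           / (120 ^+ k)) logq n =
    fps_subst (tau_coef 2 3 5) logq n.
  move=> n3; rewrite qpow_exp_logq // -fps_substD; apply: eq_fps_subst => k kn.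
  by rewrite tau_coef_2_3_5 // (leq_trans kn).
split.
  apply: fps_shift_solvable; first exact: qpow0.
  rewrite rhsE //; have [-> _ _ _] := fps_subst_logq (tau_coef 2 3 5).
  exact: tau_coef0.
move=> lam tau; apply: (@lam_values_of_tau 2 3 5 lam _ _ _ _ _ rhsE) => // n.
have -> : phi 2 3 5 / 4 - 1 / 2 = 121 / 120 by rewrite phi_2_3_5; field.
exact: tau.
Qed.

Theorem mainTheorem7 :
  (forall p1 p2 p3 : nat,
     (0 < p1)%N -> (0 < p2)%N -> (0 < p3)%N ->
     coprime p1 p2 -> coprime p1 p3 -> coprime p2 p3 ->
     1 / p1%:R + 1 / p2%:R + 1 / p3%:R < 1 :> rat ->
     (exists lam : fps, is_tau_hyp p1 p2 p3 lam) /\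
     (forall lam : fps, is_tau_hyp p1 p2 p3 lam -> lam_values p1 p2 p3 lam))
  /\
  ((exists lam : fps, is_tau_235 lam) /\
   (forall lam : fps, is_tau_235 lam -> lam_values 2 3 5 lam)).
Proof. by split; [exact: tau_hyp_lam_values | exact: tau_235_lam_values]. Qed.
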